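(* For every kernel configuration $C$, the theory $T_\theta^C$ is inductive, i.e. the union of any chain of models of $T_\theta^C$ (under substructure) is a model of $T_\theta^C$.
   Context: Setting: $L$ is a first-order language, $T$ a model-complete $L$-theory and $K$ a field. There are $L$-formulas without parameters which define, in every model $\mathcal M\models T$, a nontrivial $K$-vector space $\mathbb V=\mathbb V^{\mathcal M}$; elements of $\mathbb V$ are treated as single elements. $L_\theta=L\cup\{\theta\}$, $\theta$ a new unary function symbol; $T_\theta$ is $T$ plus axioms saying $\theta|_{\mathbb V}$ is a $K$-linear endomorphism of $\mathbb V$ and $\theta(x)=0$ for $x\notin\mathbb V$. For $\rho=\sum_i(\rho)_iX^i\in K[X]$, $\rho[\theta]:=\sum_i(\rho)_i\theta^i$, $\mathrm{Ker}(\rho)=\{v\in\mathbb V:\rho[\theta](v)=0\}$. $K[X]_{\mathrm{irr}}$ is the set of monic irreducible polynomials. A kernel configuration is a pair $C=(c,d)$ with $c:K[X]_{\mathrm{irr}}\to\mathbb N\cup\{\infty\}$, $d\in\mathbb N_{>0}\cup\{\infty\}$ such that $d=\infty$ or $d=\sum_f\deg(f)c(f)$; write $C(f)=c(f)$. $C$ is algebraic if $d<\infty$, with $\mathrm{MiPo}(C)=\prod_ff^{C(f)}$, and transcendental otherwise. $\theta$ is a $C$-endomorphism if $\mathrm{Ker}(\mathrm{MiPo}(C))=\mathbb V$ (algebraic case), resp. $\mathrm{Ker}(f^{C(f)})=\mathrm{Ker}(f^{C(f)+1})$ for all $f$ with $C(f)<\infty$ (transcendental case). $T^C_\theta:=T_\theta\cup\{\theta|_{\mathbb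 V}\text{ is a }C\text{-endomorphism}\}$. *)

From HB Require Import structures.
From mathcomp Require Import all_boot all_order all_algebra.

Unset Strict Implicit.
Unset Printing Implicit Defensive.

Import GRing.Theory.

Record signature := Signature {
  fsym : Type;                 (* function symbols (constants = arity 0) *)
  fary : fsym -> nat;
  rsym : Type;
  rary : rsym -> nat }.

Section FO.
Variable L : signature.

Inductive fo_term : Type :=
  | TVar : nat -> fo_term
  | TApp (f : fsym L) : ('I_(fary L f) -> fo_term) -> fo_term.

(* formulas; quantifiers bind variable 0 (de Bruijn) *)
Inductive fo_formula : Type :=
  | FFalse : fo_formula
  | FEq : fo_term -> fo_term -> fo_formula
  | FRel (r : rsym L) : ('I_(rary L r) -> fo_term) -> fo_formula
  | FImp : fo_formula -> fo_formula -> fo_formula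
  | FAnd : fo_formula -> fo_formula -> fo_formula
  | FOr  : fo_formula -> fo_formula -> fo_formula
  | FAll : fo_formula -> fo_formula
  | FEx  : fo_formula -> fo_formula.

Record lstruct := LStruct {
  carrier :> Type;
  funs : forall f : fsym L, ('I_(fary L f) -> carrier) -> carrier;
  rels : forall r : rsym L, ('I_(rary L r) -> carrier) -> Prop }.



Definition scons (A : Type) (x : A) (e : nat -> A) : nat -> A :=
  fun i => if i is i'.+1 then e i' else x.

Fixpoint eval (M : lstruct) (e : nat -> M) (t : fo_term) {struct t} : M :=
  match t with
  | TVar i => e i
  | TApp f a => funs M f (fun j => eval M e (a j))
  end.

Fixpoint sat (M : lstruct) (e : nat -> M) (phi : fo_formula) {struct phi} : Prop :=
  match phi with
  | FFalse => False
  | FEq t1 t2 => eval M e t1 = eval M e t2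
  | FRel r a => rels M r (fun j => eval M e (a j))
  | FImp p q => sat M e p -> sat M e q
  | FAnd p q => sat M e p /\ sat M e q
  | FOr p q => sat M e p \/ sat M e q
  | FAll p => forall x : M, sat M (scons M x e) p
  | FEx p => exists x : M, sat M (scons M x e) p
  end.

(* M satisfies phi(xs) : variables i < size xs are assigned xs_i; any other
   (free) variables are universally quantified (no parameters). *)
Definition holds (M : lstruct) (phi : fo_formula) (xs : seq M) : Prop :=
  forall e : nat -> M, sat M (fun i => nth (e i) xs i) phi.

Definition is_model (M : lstruct) (T : fo_formula -> Prop) : Prop :=
  inhabited M /\ forall phi, T phi -> forall e : nat -> M, sat M e phi.

Definition embedding (M N : lstruct) (h : M -> N) : Prop :=
  injective h /\
  (forall f a, h (funs M f a) = funs N f (fun j => h (a j))) /\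
  (forall r a, rels M r a <-> rels N r (fun j => h (a j))).

Definition model_complete (T : fo_formula -> Prop) : Prop :=
  forall (M N : lstruct), is_model M T -> is_model N T ->
  forall h : M -> N, embedding M N h ->
  forall (phi : fo_formula) (e : nat -> M), sat M e phi <-> sat N (fun i => h (e i)) phi.

Definition func_closed (M : lstruct) (P : M -> Prop) : Prop :=
  forall f a, (forall j, P (a j)) -> P (funs M f a).

Definition substr (M : lstruct) (P : M -> Prop) (HP : func_closed M P) : lstruct :=
  {| carrier := {x : M | P x};
     funs := fun f a => exist P (funs M f (fun j => sval (a j)))
                              (HP f _ (fun j => proj2_sig (a j)));
     rels := fun r a => rels M r (fun j => sval (a j)) |}.

Definition sub_unary (M : lstruct) (P : M -> Prop) (HP : func_closed M P) (th : M -> M)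
  (Hth : forall x, P x -> P (th x)) : substr M P HP -> substr M P HP :=
  fun x => exist P (th (sval x)) (Hth _ (proj2_sig x)).

End FO.
Arguments TVar {L}.  Arguments TApp {L}.
Arguments FFalse {L}. Arguments FEq {L}. Arguments FRel {L}. Arguments FImp {L}.
Arguments FAnd {L}. Arguments FOr {L}. Arguments FAll {L}. Arguments FEx {L}.
Arguments funs {L}. Arguments rels {L}. Arguments carrier {L}.
Arguments scons {A}.
Arguments eval {L}. Arguments sat {L}. Arguments holds {L}. Arguments is_model {L}.
Arguments embedding {L}. Arguments model_complete {L}. Arguments func_closed {L}.
Arguments substr {L}. Arguments sub_unary {L}.

(* formulas (without parameters) defining V (variable 0), the graph of
   addition (variables 0,1,2 : x + y = z) and, for each a in K, the graph of
   scalar multiplication by a (variables 0,1 : a x = y) *)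
Record vsdef (L : signature) (K : fieldType) := VSDef {
  phiV : fo_formula L;
  phiAdd : fo_formula L;
  phiSc : K -> fo_formula L }.
Arguments phiV {L K}. Arguments phiAdd {L K}. Arguments phiSc {L K}.

Section VS.
Variables (L : signature) (K : fieldType) (D : vsdef L K) (M : lstruct L).

Definition inV (x : M) := holds M (phiV D) [:: x].
Definition addR (x y z : M) := holds M (phiAdd D) [:: x; y; z].
Definition scR (a : K) (x y : M) := holds M (phiSc D a) [:: x; y].
Definition iszero (z : M) := inV z /\ addR z z z.

Definition defines_nt_vs : Prop :=
  exists (add : M -> M -> M) (sc : K -> M -> M) (z : M),
    inV z /\
    (forall x y, inV x -> inV y -> inV (add x y)) /\
    (forall a x, inV x -> inV (sc a x)) /\
    (forall x y u, inV x -> inV y -> (addR x y u <-> u = add x y)) /\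
    (forall a x u, inV x -> (scR a x u <-> u = sc a x)) /\
    (forall x y w, inV x -> inV y -> inV w -> add x (add y w) = add (add x y) w) /\
    (forall x y, inV x -> inV y -> add x y = add y x) /\
    (forall x, inV x -> add z x = x) /\
    (forall x, inV x -> exists y, inV y /\ add x y = z) /\
    (forall a x y, inV x -> inV y -> sc a (add x y) = add (sc a x) (sc a y)) /\
    (forall a b x, inV x -> sc (a + b)%R x = add (sc a x) (sc b x)) /\
    (forall a b x, inV x -> sc (a * b)%R x = sc a (sc b x)) /\
    (forall x, inV x -> sc 1%R x = x) /\
    (exists x, inV x /\ x <> z).

Variable th : M -> M.

(* axioms of T_theta beyond T: th|V is a K-linear endomorphism of V and
   th(x) = 0 for x outside V *)
Definition theta_ok : Prop :=
  (forall v, inV v -> inV (th v)) /\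
  (forall v w u, inV v -> inV w -> inV u -> addR v w u -> addR (th v) (th w) (th u)) /\
  (forall a v u, inV v -> inV u -> scR a v u -> scR a (th v) (th u)) /\
  (forall x, ~ inV x -> iszero (th x)).

(* polyrel s v u  <->  u = rho[th](v) where s is the coefficient list of rho
   (lowest degree first), computed by Horner:
   (c + X rho')[th](v) = c v + rho'[th](th v) *)
Fixpoint polyrel (s : seq K) (v u : M) {struct s} : Prop :=
  match s with
  | [::] => iszero u
  | c :: s' => exists w w', [/\ inV w, inV w', polyrel s' (th v) w,
                                scR c v w' & addR w' w u]
  end.

Definition Ker (rho : {poly K}) (v : M) : Prop :=
  inV v /\ exists u, polyrel (polyseq rho) v u /\ iszero u.

End VS.
Arguments inV {L K}. Arguments addR {L K}. Arguments scR {L K}.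
Arguments iszero {L K}. Arguments defines_nt_vs {L K}. Arguments theta_ok {L K}.
Arguments polyrel {L K}. Arguments Ker {L K}.

Section KConf.
Variable K : fieldType.

Definition irr_monic (f : {poly K}) : Prop := f \is monic /\ irreducible_poly f.

(* N u {oo} is encoded as option nat, None = oo.
   fin_support c n s : s lists (without repetition) monic irreducibles outside
   of which c vanishes, c is finite on s, and n = sum_f deg(f) c(f). *)
Definition fin_support (c : {poly K} -> option nat) (n : nat) (s : seq {poly K}) : Prop :=
  uniq s /\
  (forall f, f \in s -> irr_monic f) /\
  (forall f, irr_monic f -> f \notin s -> c f = Some 0%N) /\
  (forall f, f \in s -> c f <> None) /\
  n = (\sum_(f <- s) ((size f).-1 * odflt 0 (c f)))%N.

Definition kernel_configuration (c : {poly K} -> option nat) (d : option nat) : Prop :=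
  d <> Some 0%N /\ (forall n, d = Some n -> exists s, fin_support c n s).

Definition is_MiPo (c : {poly K} -> option nat) (d : option nat) (P : {poly K}) : Prop :=
  exists n s, d = Some n /\ fin_support c n s /\
              P = (\prod_(f <- s) f ^+ (odflt 0%N (c f)))%R.

End KConf.
Arguments irr_monic {K}. Arguments fin_support {K}.
Arguments kernel_configuration {K}. Arguments is_MiPo {K}.

Section TC.
Variables (L : signature) (K : fieldType) (D : vsdef L K) (M : lstruct L) (th : M -> M).

Definition C_endo (c : {poly K} -> option nat) (d : option nat) : Prop :=
  match d with
  | Some _ => forall P, is_MiPo c d P -> forall v, inV D M v -> Ker D M th P v
  | None => forall f m, irr_monic f -> c f = Some m ->
              forall v, Ker D M th (f ^+ m)%R v <-> Ker D M th (f ^+ m.+1)%R v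
  end.

(* (M, th) is a model of T_theta^C (an L_theta-structure is an L-structure
   together with the interpretation th of theta) *)
Definition model_TC (T : fo_formula L -> Prop) (c : {poly K} -> option nat)
  (d : option nat) : Prop :=
  is_model M T /\ theta_ok D M th /\ C_endo c d.

End TC.
Arguments C_endo {L K}. Arguments model_TC {L K}.

From mathcomp Require Import all_boot all_order all_algebra.
From mathcomp Require Import zify.
From Stdlib Require Import FunctionalExtensionality ProofIrrelevance.

(* Tarski's chain argument. Since T is model complete, every inclusion
   S_i <= S_k of members of the chain is an elementary embedding; as finitely
   many elements of the union U always lie in a common member, an induction on
   formulas shows that each S_i is an elementary substructure of U. Hence U is
   a model of T, and the relations defining V, its addition and its scalar
   multiplications restrict on each S_i to those of U. An instance of an axiom
   of T_theta^C (linearity of theta, theta = 0 off V, Ker(MiPo(C)) = V, or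
   Ker(f^m) = Ker(f^(m+1))) involves finitely many elements, including the
   intermediate values of the evaluation of rho[theta](v); they all lie in one
   member of the chain, where the axiom holds, and it transfers to U. *)

Section FreeVariables.
Context {L : signature}.

Fixpoint fv_bound_term (t : fo_term L) : nat :=
  match t with
  | TVar k => k.+1
  | TApp f a => \max_(j < fary L f) fv_bound_term (a j)
  end.

Fixpoint fv_bound (p : fo_formula L) : nat :=
  match p with
  | FFalse => 0
  | FEq t1 t2 => maxn (fv_bound_term t1) (fv_bound_term t2)
  | FRel r a => \max_(j < rary L r) fv_bound_term (a j)
  | FImp p q | FAnd p q | FOr p q => maxn (fv_bound p) (fv_bound q)
  | FAll p | FEx p => (fv_bound p).-1
  end.

Fixpoint rename_term (r : nat -> nat) (t : fo_term L) : fo_term L :=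
  match t with
  | TVar k => TVar (r k)
  | TApp f a => TApp f (fun j => rename_term r (a j))
  end.

Definition up_ren (r : nat -> nat) (k : nat) : nat :=
  if k is k'.+1 then (r k').+1 else 0.

Fixpoint rename (r : nat -> nat) (p : fo_formula L) : fo_formula L :=
  match p with
  | FFalse => FFalse
  | FEq t1 t2 => FEq (rename_term r t1) (rename_term r t2)
  | FRel rr a => FRel rr (fun j => rename_term r (a j))
  | FImp p q => FImp (rename r p) (rename r q)
  | FAnd p q => FAnd (rename r p) (rename r q)
  | FOr p q => FOr (rename r p) (rename r q)
  | FAll p => FAll (rename (up_ren r) p)
  | FEx p => FEx (rename (up_ren r) p)
  end.

Fixpoint FAlln (n : nat) (p : fo_formula L) : fo_formula L :=
  if n is n'.+1 then FAll (FAlln n' p) else p.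

(* The variables [k >= s] of [p] are moved below [fv_bound p] and bound; the
   parameters [k < s] are shifted above the new binders and stay free. *)
Definition univ_closure (p : fo_formula L) (s : nat) : fo_formula L :=
  let m := fv_bound p in
  FAlln m (rename (fun k => if k < s then k + m else k - s) p).

Context {M : lstruct L}.

Lemma eval_agree (t : fo_term L) (e1 e2 : nat -> M) :
  (forall k, k < fv_bound_term t -> e1 k = e2 k) -> eval M e1 t = eval M e2 t.
Proof.
elim: t e1 e2 => [k|f a IH] e1 e2 /= He; first exact: He.
congr (funs M f); apply: functional_extensionality => j; apply: IH => k Hk.
by apply: He; apply: leq_trans Hk (leq_bigmax (F := fun j => fv_bound_term (a j)) j).
Qed.

Lemma sat_agree (p : fo_formula L) (e1 e2 : nat -> M) :
  (forall k, k < fv_bound p -> e1 k = e2 k) -> (sat M e1 p <-> sat M e2 p).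
Proof.
have scons_agree n (x : M) (e1' e2' : nat -> M) :
    (forall k, k < n.-1 -> e1' k = e2' k) ->
    forall k, k < n -> scons x e1' k = scons x e2' k.
  by move=> He [|k] Hk //=; apply: He; lia.
elim: p e1 e2 => [|t1 t2|r a|p IHp q IHq|p IHp q IHq|p IHp q IHq|p IHp|p IHp]
  e1 e2 /= He.
- by [].
- by rewrite (@eval_agree t1 e1 e2) ?(@eval_agree t2 e1 e2) // => k Hk;
    apply: He; rewrite leq_max Hk ?orbT.
- suff -> : (fun j => eval M e1 (a j)) = (fun j => eval M e2 (a j)) by [].
  apply: functional_extensionality => j; apply: eval_agree => k Hk.
  by apply: He; apply: leq_trans Hk (leq_bigmax (F := fun j => fv_bound_term (a j)) j).
- have := IHp e1 e2 (fun k Hk => He k (leq_trans Hk (leq_maxl _ _))).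
  have := IHq e1 e2 (fun k Hk => He k (leq_trans Hk (leq_maxr _ _))); tauto.
- have := IHp e1 e2 (fun k Hk => He k (leq_trans Hk (leq_maxl _ _))).
  have := IHq e1 e2 (fun k Hk => He k (leq_trans Hk (leq_maxr _ _))); tauto.
- have := IHp e1 e2 (fun k Hk => He k (leq_trans Hk (leq_maxl _ _))).
  have := IHq e1 e2 (fun k Hk => He k (leq_trans Hk (leq_maxr _ _))); tauto.
- have E x := IHp _ _ (scons_agree _ x _ _ He).
  by split=> Hx x; apply/E.
- have E x := IHp _ _ (scons_agree _ x _ _ He).
  by split=> -[x Hx]; exists x; apply/E.
Qed.

Lemma eval_rename r (t : fo_term L) (e : nat -> M) :
  eval M e (rename_term r t) = eval M (fun k => e (r k)) t.
Proof.
elim: t => [k|f a IH] //=.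
by congr (funs M f); apply: functional_extensionality => j; exact: IH.
Qed.

Lemma sat_rename r (p : fo_formula L) (e : nat -> M) :
  sat M e (rename r p) <-> sat M (fun k => e (r k)) p.
Proof.
have scons_up r' (x : M) (e' : nat -> M) :
    (fun k => scons x e' (up_ren r' k)) = scons x (fun k => e' (r' k)).
  by apply: functional_extensionality => -[|k].
elim: p r e => [|t1 t2|rr a|p IHp q IHq|p IHp q IHq|p IHp q IHq|p IHp|p IHp] r e /=.
- by [].
- by rewrite !eval_rename.
- suff -> : (fun j => eval M e (rename_term r (a j))) =
            (fun j => eval M (fun k => e (r k)) (a j)) by [].
  by apply: functional_extensionality => j; exact: eval_rename.
- by have := IHp r e; have := IHq r e; tauto.
- by have := IHp r e; have := IHq r e; tauto.
- by have := IHp r e; have := IHq r e; tauto.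
- split=> H x; move: (H x); have := IHp (up_ren r) (scons x e); rewrite scons_up; tauto.
- split=> -[x Hx]; exists x; move: Hx;
    have := IHp (up_ren r) (scons x e); rewrite scons_up; tauto.
Qed.

Lemma sat_FAlln n (p : fo_formula L) (e : nat -> M) :
  sat M e (FAlln n p) <->
  forall g : nat -> M, sat M (fun k => if k < n then g k else e (k - n)) p.
Proof.
elim: n e => [|n IH] e /=.
  have E g : (fun k => if k < 0 then g k else e (k - 0)) = e.
    by apply: functional_extensionality => k; rewrite subn0.
  by split=> [H g|H]; [rewrite E | have := H e; rewrite E].
have E g (x : M) : (fun k => if k < n then g k else scons x e (k - n)) =
                   (fun k => if k < n.+1 then (if k < n then g k else x) else e (k - n.+1)).
  apply: functional_extensionality => k.
  case: (ltngtP k n) => [Hk|Hk|->]; last by rewrite ltnSn subnn.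
    by rewrite ltnW.
  rewrite !ifF; try lia.
  by rewrite (_ : k - n = (k - n.+1).+1) //; lia.
split=> [H g|H x].
  suff <- : (fun k => if k < n.+1 then (if k < n then g k else g n) else e (k - n.+1)) =
            (fun k => if k < n.+1 then g k else e (k - n.+1)).
    by rewrite -E; exact: (IH _).1 (H (g n)) g.
  by apply: functional_extensionality => k; rewrite ltnS; case: ltngtP => // ->.
by apply/IH => g; rewrite E.
Qed.

Lemma sat_univ_closure (p : fo_formula L) s (e : nat -> M) :
  sat M e (univ_closure p s) <->
  forall g : nat -> M, sat M (fun k => if k < s then e k else g (k - s)) p.
Proof.
rewrite /univ_closure sat_FAlln; set m := fv_bound p.
suff E g : sat M (fun k => if k < m then g k else e (k - m))
                 (rename (fun k => if k < s then k + m else k - s) p) <->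
           sat M (fun k => if k < s then e k else g (k - s)) p.
  by split=> H g; apply/E.
rewrite sat_rename; apply: sat_agree => k Hk.
case: (ltnP k s) => Hks; first by rewrite ltnNge leq_addl /= addnK.
by rewrite (_ : k - s < m) //; rewrite /m; lia.
Qed.

Lemma holds_univ_closure (p : fo_formula L) (xs : seq M) (e : nat -> M) :
  holds M p xs <-> sat M (fun k => nth (e k) xs k) (univ_closure p (size xs)).
Proof.
rewrite sat_univ_closure; set s := size xs.
have env_nth (g e' : nat -> M) : (forall k, s <= k -> e' k = g (k - s)) ->
    (fun k => nth (e' k) xs k) = (fun k => if k < s then nth (e k) xs k else g (k - s)).
  move=> Hg; apply: functional_extensionality => k.
  by case: ltnP => Hk; [apply: set_nth_default | rewrite nth_default // Hg].
split=> [H g | H e'].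
  by rewrite -(env_nth g (fun k => g (k - s))).
rewrite (env_nth (fun j => e' (j + s))); first exact: (H (fun j => e' (j + s))).
by move=> k Hk; rewrite subnK.
Qed.

End FreeVariables.

Lemma sval_inj {A : Type} {P : A -> Prop} (x y : {a | P a}) : sval x = sval y -> x = y.
Proof. by move=> E; apply: eq_sig_hprop => // a p q; apply: proof_irrelevance. Qed.

Definition substr_incl {L : signature} {U : lstruct L} {P Q : U -> Prop}
    (HP : func_closed U P) (HQ : func_closed U Q) (PQ : forall x, P x -> Q x) :
    substr U P HP -> substr U Q HQ :=
  fun x => exist Q (sval x) (PQ _ (proj2_sig x)).

Lemma substr_incl_embedding {L : signature} {U : lstruct L} {P Q : U -> Prop}
    (HP : func_closed U P) (HQ : func_closed U Q) (PQ : forall x, P x -> Q x) :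
  embedding (substr U P HP) (substr U Q HQ) (substr_incl HP HQ PQ).
Proof.
split; [|split] => //.
- by move=> x y /(f_equal sval) /= E; apply: sval_inj.
- by move=> f a; apply: sval_inj.
Qed.

Lemma eval_substr {L : signature} {U : lstruct L} {P : U -> Prop} (HP : func_closed U P)
    (t : fo_term L) (e : nat -> substr U P HP) :
  sval (eval (substr U P HP) e t) = eval U (fun k => sval (e k)) t.
Proof.
elim: t => [k|f a IH] //=.
by congr (funs U f); apply: functional_extensionality => j; exact: IH.
Qed.

Section VectorSpaceMaps.
Context {L : signature} {K : fieldType} (D : vsdef L K) {M N : lstruct L}.

Definition vs_hom (h : M -> N) : Prop :=
  [/\ forall x, inV D M x -> inV D N (h x),
      forall x y z, addR D M x y z -> addR D N (h x) (h y) (h z) &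
      forall a x y, scR D M a x y -> scR D N a (h x) (h y)].

Context {h : M -> N} {thM : M -> M} {thN : N -> N}.
Hypothesis hom_h : vs_hom h.
Hypothesis h_th : forall x, h (thM x) = thN (h x).

Lemma iszero_hom x : iszero D M x -> iszero D N (h x).
Proof. by case: hom_h => hV hA _ [Vx Ax]; split; [apply: hV | apply: hA]. Qed.

Lemma polyrel_hom s v u : polyrel D M thM s v u -> polyrel D N thN s (h v) (h u).
Proof.
case: hom_h => hV hA hS.
elim: s v u => [|a s IH] v u /=; first exact: iszero_hom.
case=> w [w' [Vw Vw' Hs Hsc Hadd]]; exists (h w), (h w'); split; auto.
by rewrite -h_th; apply: IH.
Qed.

Lemma Ker_hom P v : Ker D M thM P v -> Ker D N thN P (h v).
Proof.
case=> Vv [u [Hp Zu]]; split; first by case: hom_h => hV _ _; apply: hV.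
by exists (h u); split; [apply: polyrel_hom | apply: iszero_hom].
Qed.

End VectorSpaceMaps.
Arguments vs_hom {L K} D {M N} h.

Section ChainUnion.
Variables (L : signature) (U : lstruct L) (I : Type) (S : I -> U -> Prop).
Hypothesis HSf : forall i, func_closed U (S i).
Hypothesis Hchain : forall i j, (forall x, S i x -> S j x) \/ (forall x, S j x -> S i x).
Hypothesis Hcov : forall x, exists i, S i x.

Local Notation SS i := (substr U (S i) (HSf i)).

Lemma chain_extend i x : exists k, (forall y, S i y -> S k y) /\ S k x.
Proof.
have [j Sjx] := Hcov x.
by case: (Hchain i j) => Sij; [exists j | exists i; split=> //; apply: Sij].
Qed.

Lemma chain_bound i x y z :
  exists k, [/\ forall a, S i a -> S k a, S k x, S k y & S k z].
Proof.
have [k1 [S1 Sx]] := chain_extend i x.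
have [k2 [S2 Sy]] := chain_extend k1 y.
have [k [S3 Sz]] := chain_extend k2 z.
exists k; split=> //.
- by move=> a /S1/S2/S3.
- by apply/S3/S2.
- by apply/S3.
Qed.

Variable T : fo_formula L -> Prop.
Hypothesis HT : model_complete T.
Hypothesis Hmodel : forall i, is_model (SS i) T.

Lemma sat_chain_substr i (p : fo_formula L) (e : nat -> SS i) :
  sat (SS i) e p <-> sat U (fun k => sval (e k)) p.
Proof.
have sval_scons j (x : SS j) (e' : nat -> SS j) :
    (fun k => sval (scons x e' k)) = scons (sval x) (fun k => sval (e' k)).
  by apply: functional_extensionality => -[|k].
have incl_elementary j k (Sjk : forall y, S j y -> S k y) (q : fo_formula L) (e' : nat -> SS j) :=
  HT _ _ (Hmodel j) (Hmodel k) _ (substr_incl_embedding (HSf j) (HSf k) Sjk) q e'.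
elim: p i e => [|t1 t2|r a|p IHp q IHq|p IHp q IHq|p IHp q IHq|p IHp|p IHp] i e /=.
- by [].
- by rewrite -!eval_substr; split=> [->|/sval_inj].
- suff -> : (fun j => eval U (fun k => sval (e k)) (a j)) =
            (fun j => sval (eval (SS i) e (a j))) by [].
  by apply: functional_extensionality => j; rewrite eval_substr.
- by have := IHp i e; have := IHq i e; tauto.
- by have := IHp i e; have := IHq i e; tauto.
- by have := IHp i e; have := IHq i e; tauto.
- split=> H x; last by apply/IHp; rewrite sval_scons; apply: H.
  have [k [Sik Skx]] := chain_extend i x.
  have /IHp := (incl_elementary _ _ Sik (FAll p) e).1 H (exist _ x Skx).
  by rewrite sval_scons.
- split=> -[x H]; first by exists (sval x); move/IHp: H; rewrite sval_scons.
  have [k [Sik Skx]] := chain_extend i x.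
  apply/(incl_elementary _ _ Sik (FEx p) e); exists (exist _ x Skx).
  by apply/IHp; rewrite sval_scons.
Qed.

(* [holds] also quantifies over the free variables beyond [xs], which range
   over [SS i] on the left and over [U] on the right: passing to the universal
   closure makes them bound. *)
Lemma holds_chain_substr i (p : fo_formula L) (xs : seq (SS i)) :
  holds (SS i) p xs <-> holds U p (map sval xs).
Proof.
have [[x0] _] := Hmodel i.
rewrite (holds_univ_closure _ _ (fun=> x0)) (holds_univ_closure _ _ (fun=> sval x0)).
rewrite size_map sat_chain_substr.
suff -> : (fun k => sval (nth x0 xs k)) = (fun k => nth (sval x0) (map sval xs) k) by [].
apply: functional_extensionality => k.
by case: (ltnP k (size xs)) => Hk; [rewrite (nth_map x0) | rewrite !nth_default ?size_map].
Qed.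

Hypothesis Hne : inhabited I.

Lemma chain_union_is_model : is_model U T.
Proof.
case: Hne => i; have [[x0] HTi] := Hmodel i.
split=> [|phi Tphi e]; first by constructor; exact: sval x0.
have Hphi : holds U phi [::] by apply/(holds_chain_substr i phi [::]) => e'; apply: HTi.
have -> : e = (fun k => nth (e k) [::] k).
  by apply: functional_extensionality => k; rewrite nth_nil.
exact: (Hphi e).
Qed.

Variables (K : fieldType) (D : vsdef L K).

Lemma inV_substr {i} (x : SS i) : inV D (SS i) x <-> inV D U (sval x).
Proof. exact: (holds_chain_substr i _ [:: x]). Qed.

Lemma addR_substr {i} (x y z : SS i) :
  addR D (SS i) x y z <-> addR D U (sval x) (sval y) (sval z).
Proof. exact: (holds_chain_substr i _ [:: x; y; z]). Qed.

Lemma scR_substr {i} a (x y : SS i) : scR D (SS i) a x y <-> scR D U a (sval x) (sval y).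
Proof. exact: (holds_chain_substr i _ [:: x; y]). Qed.

Lemma iszero_substr {i} (x : SS i) : iszero D (SS i) x <-> iszero D U (sval x).
Proof. by rewrite /iszero inV_substr addR_substr. Qed.

Lemma vs_hom_sval i : vs_hom D (M := SS i) (N := U) sval.
Proof. by split=> [x /inV_substr | x y z /addR_substr | a x y /scR_substr]. Qed.

Lemma vs_hom_substr_incl i k (Sik : forall x, S i x -> S k x) :
  vs_hom D (substr_incl (HSf i) (HSf k) Sik).
Proof.
split=> [x | x y z | a x y].
- by move/inV_substr=> Vx; apply/inV_substr.
- by move/addR_substr=> Axyz; apply/addR_substr.
- by move/scR_substr=> Sxy; apply/scR_substr.
Qed.

Variables (thU : U -> U) (HSt : forall i x, S i x -> S i (thU x)).

Local Notation thS i := (sub_unary U (S i) (HSf i) thU (HSt i)).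

Lemma Ker_sval {i} P (x : SS i) :
  Ker D (SS i) (thS i) P x -> Ker D U thU P (sval x).
Proof. exact: (Ker_hom D (vs_hom_sval i) (fun=> erefl) P x). Qed.

Lemma polyrel_union_substr s v u :
  polyrel D U thU s v u ->
  exists i (Sv : S i v) (Su : S i u),
    polyrel D (SS i) (thS i) s (exist _ v Sv) (exist _ u Su).
Proof.
elim: s v u => [|a s IH] v u /=.
  move=> Zu; have [i _] := Hcov v; have [k [_ Sv Su _]] := chain_bound i v u u.
  by exists k, Sv, Su; apply/iszero_substr.
case=> w [w' [Vw Vw' Hs Hsc Hadd]].
have [i [Sthv [Sw Hi]]] := IH _ _ Hs.
have [k [Sik Sv Sw' Su]] := chain_bound i v w' u.
exists k, Sv, Su, (exist _ w (Sik _ Sw)), (exist _ w' Sw'); split.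
- exact/inV_substr.
- exact/inV_substr.
- have -> : thS k (exist _ v Sv) = substr_incl (HSf i) (HSf k) Sik (exist _ (thU v) Sthv).
    exact: sval_inj.
  apply: (polyrel_hom D (vs_hom_substr_incl _ _ Sik) _ _ _ _ Hi) => x.
  exact: sval_inj.
- exact/scR_substr.
- exact/addR_substr.
Qed.

Lemma Ker_union_substr P v :
  Ker D U thU P v -> exists i (Sv : S i v), Ker D (SS i) (thS i) P (exist _ v Sv).
Proof.
case=> Vv [u [Hp Zu]]; have [i [Sv [Su Hi]]] := polyrel_union_substr _ _ _ Hp.
exists i, Sv; split; first exact/inV_substr.
by exists (exist _ u Su); split=> //; apply/iszero_substr.
Qed.

Lemma theta_ok_chain_union :
  (forall i, theta_ok D (SS i) (thS i)) -> theta_ok D U thU.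
Proof.
move=> Hth; split; [|split; [|split]].
- move=> v Vv; have [i Sv] := Hcov v; have [Hi _] := Hth i.
  by apply/(inV_substr (thS i (exist _ v Sv)))/Hi/inV_substr.
- move=> v w u Vv Vw Vu Hadd; have [i _] := Hcov v.
  have [k [_ Sv Sw Su]] := chain_bound i v w u; have [_ [Hk _]] := Hth k.
  apply/(addR_substr (thS k (exist _ v Sv)) (thS k (exist _ w Sw)) (thS k (exist _ u Su))).
  by apply: Hk; [exact/inV_substr | exact/inV_substr | exact/inV_substr | exact/addR_substr].
- move=> a v u Vv Vu Hsc; have [i _] := Hcov v.
  have [k [_ Sv Su _]] := chain_bound i v u u; have [_ [_ [Hk _]]] := Hth k.
  apply/(scR_substr a (thS k (exist _ v Sv)) (thS k (exist _ u Su))).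
  by apply: Hk; [exact/inV_substr | exact/inV_substr | exact/scR_substr].
- move=> x NVx; have [i Sx] := Hcov x; have [_ [_ [_ Hi]]] := Hth i.
  apply/(iszero_substr (thS i (exist _ x Sx)))/Hi.
  by move/inV_substr.
Qed.

Lemma C_endo_chain_union c d :
  (forall i, C_endo D (SS i) (thS i) c d) -> C_endo D U thU c d.
Proof.
case: d => [n|] Hend.
  move=> P HP v Vv; have [i Sv] := Hcov v.
  exact/(Ker_sval _ (exist _ v Sv))/(Hend i P HP)/inV_substr.
move=> f m Hf Hc v; split=> /Ker_union_substr [i [Sv Hi]];
  apply: (Ker_sval _ (exist _ v Sv)); apply/(Hend i f m Hf Hc) => //.
Qed.

End ChainUnion.

Theorem lemma2p18 (L : signature) (T : fo_formula L -> Prop) (K : fieldType)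
  (D : vsdef L K)
  (HT : model_complete T)
  (HD : forall M : lstruct L, is_model M T -> defines_nt_vs D M)
  (c : {poly K} -> option nat) (d : option nat)
  (HC : kernel_configuration c d)
  (U : lstruct L) (thU : U -> U) (I : Type) (S : I -> U -> Prop)
  (HSf : forall i, func_closed U (S i))
  (HSt : forall i x, S i x -> S i (thU x))
  (Hne : inhabited I)
  (Hchain : forall i j, (forall x, S i x -> S j x) \/ (forall x, S j x -> S i x))
  (Hcov : forall x, exists i, S i x)
  (Hmod : forall i, model_TC D (substr U (S i) (HSf i)) (sub_unary U (S i) (HSf i) thU (HSt i)) T c d) :
  model_TC D U thU T c d.
Proof.
have Hmodel i : is_model (substr U (S i) (HSf i)) T by case: (Hmod i).
split; [|split].
- exact: (chain_union_is_model _ _ _ _ _ Hchain Hcov _ HT Hmodel Hne).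
- apply: (theta_ok_chain_union _ _ _ _ _ Hchain Hcov _ HT Hmodel _ _ _ HSt) => i.
  by case: (Hmod i) => _ [].
- apply: (C_endo_chain_union _ _ _ _ _ Hchain Hcov _ HT Hmodel _ _ _ HSt) => i.
  by case: (Hmod i) => _ [].
Qed.
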